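(* Let $H=(H,\Delta,\epsilon,\phi,S,\alpha,\beta)$ be a quasi-Hopf algebra over a field $k$ (not necessarily finite-dimensional), and let $\nu\colon H\to Q$ be a surjective morphism of quasibialgebras onto a finite-dimensional quasibialgebra $Q$. Then $S(\ker\nu)\subseteq\ker\nu$. Consequently $S$ induces an anti-algebra endomorphism $\overline S$ of $Q$ with $\overline S\circ\nu=\nu\circ S$, the triple $(\overline S,\nu(\alpha),\nu(\beta))$ is a quasi-antipode for $Q$, and $\nu$ is a morphism of quasi-Hopf algebras; i.e. $Q$ is a quotient quasi-Hopf algebra of $H$.
   Context: A quasibialgebra $(H,\Delta,\epsilon,\phi)$ over a field $k$ consists of an algebra $H$, algebra maps $\Delta\colon H\to H\otimes H$, $h\mapsto h_{(1)}\otimes h_{(2)}$, and $\epsilon\colon H\to k$, and an invertible $\phi=\phi^{(1)}\otimes\phi^{(2)}\otimes\phi^{(3)}\in H^{\otimes 3}$ (with $\phi^{-1}=\phi^{(-1)}\otimes\phi^{(-2)}\otimes\phi^{(-3)}$) such that $(\epsilon\otimes H)\Delta(h)=h=(H\otimes\epsilon)\Delta(h)$; $(H\otimes\Delta)\Delta(h)\,\phi=\phi\,(\Delta\otimes H)\Delta(h)$; $(H\otimes H\otimes\Delta)(\phi)(\Delta\otimes H\otimes H)(\phi)=(1\otimes\phi)(H\otimes\Delta\otimes H)(\phi)(\phi\otimes 1)$; and $(H\otimes\epsilon\otimes H)(\phi)=1$. A morphism of quasibialgebras $f\colon(H,\phi)\to(L,\psi)$ is an algebra map with $\Delta f=(f\otimes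 f)\Delta$, $\epsilon f=\epsilon$, $(f\otimes f\otimes f)(\phi)=\psi$. A quasi-antipode is a triple $(S,\alpha,\beta)$ with $\alpha,\beta\in H$ and $S$ an anti-algebra endomorphism of $H$ (not required to be bijective) such that for all $h\in H$: $S(h_{(1)})\alpha h_{(2)}=\epsilon(h)\alpha$, $h_{(1)}\beta S(h_{(2)})=\epsilon(h)\beta$, $\phi^{(1)}\beta S(\phi^{(2)})\alpha\phi^{(3)}=1$, $S(\phi^{(-1)})\alpha\phi^{(-2)}\beta S(\phi^{(-3)})=1$. A quasi-Hopf algebra is a quasibialgebra with a quasi-antipode; a morphism of quasi-Hopf algebras is a quasibialgebra morphism $f$ with $S'f=fS$, $f(\alpha)=\alpha'$, $f(\beta)=\beta'$. *)

From HB Require Import structures.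
From mathcomp Require Import all_boot all_algebra.
From mathcomp Require Import falgebra.
Set Implicit Arguments.
Unset Strict Implicit.
Unset Printing Implicit Defensive.
Import GRing.Theory.
Local Open Scope ring_scope.

(* Algebras over a field k are [algType k] (possibly
   infinite-dimensional); a finite-dimensional algebra is an [falgType k]. *)

Section Tensors.
Variable k : fieldType.

Definition klinear (U W : lmodType k) (f : U -> W) : Prop :=
  forall (a : k) (x y : U), f (a *: x + y) = a *: f x + f y.

Variable A : algType k.

Definition multilin2 (W : lmodType k) (m : A -> A -> W) : Prop :=
  (forall y, klinear (fun x => m x y)) /\ (forall x, klinear (fun y => m x y)).
Definition multilin3 (W : lmodType k) (m : A -> A -> A -> W) : Prop :=
  [/\ forall y z, klinear (fun x => m x y z),
      forall x z, klinear (fun y => m x y z) &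
      forall x y, klinear (fun z => m x y z)].
Definition multilin4 (W : lmodType k) (m : A -> A -> A -> A -> W) : Prop :=
  [/\ forall y z w, klinear (fun x => m x y z w),
      forall x z w, klinear (fun y => m x y z w),
      forall x y w, klinear (fun z => m x y z w) &
      forall x y z, klinear (fun w => m x y z w)].

(* Elements of A^{(x)n} are represented by finite sums of elementary tensors
   (lists of n-tuples); [teqn t u] is equality in the algebraic tensor product
   A (x)_k ... (x)_k A, expressed via its universal property: t and u agree
   under every k-multilinear map to every k-vector space. *)
Definition tensor2 := seq (A * A).
Definition tensor3 := seq (A * A * A).
Definition tensor4 := seq (A * A * A * A).

Definition teq2 (t u : tensor2) : Prop :=
  forall (W : lmodType k) (m : A -> A -> W), multilin2 m ->
    \sum_(x <- t) m x.1 x.2 = \sum_(x <- u) m x.1 x.2.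
Definition teq3 (t u : tensor3) : Prop :=
  forall (W : lmodType k) (m : A -> A -> A -> W), multilin3 m ->
    \sum_(x <- t) m x.1.1 x.1.2 x.2 = \sum_(x <- u) m x.1.1 x.1.2 x.2.
Definition teq4 (t u : tensor4) : Prop :=
  forall (W : lmodType k) (m : A -> A -> A -> A -> W), multilin4 m ->
    \sum_(x <- t) m x.1.1.1 x.1.1.2 x.1.2 x.2
    = \sum_(x <- u) m x.1.1.1 x.1.1.2 x.1.2 x.2.

Definition tmul2 (t u : tensor2) : tensor2 :=
  [seq (x.1 * y.1, x.2 * y.2) | x <- t, y <- u].
Definition tmul3 (t u : tensor3) : tensor3 :=
  [seq (x.1.1 * y.1.1, x.1.2 * y.1.2, x.2 * y.2) | x <- t, y <- u].
Definition tmul4 (t u : tensor4) : tensor4 :=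
  [seq (x.1.1.1 * y.1.1.1, x.1.1.2 * y.1.1.2, x.1.2 * y.1.2, x.2 * y.2)
  | x <- t, y <- u].

Definition tone2 : tensor2 := [:: (1, 1)].
Definition tone3 : tensor3 := [:: (1, 1, 1)].

Definition tscale2 (a : k) (t : tensor2) : tensor2 :=
  [seq (a *: x.1, x.2) | x <- t].
Definition tadd2 (t u : tensor2) : tensor2 := t ++ u.

Variable Delta : A -> tensor2.

Definition id_Delta (t : tensor2) : tensor3 :=
  flatten [seq [seq (x.1, y.1, y.2) | y <- Delta x.2] | x <- t].
Definition Delta_id (t : tensor2) : tensor3 :=
  flatten [seq [seq (y.1, y.2, x.2) | y <- Delta x.1] | x <- t].

Definition idid_Delta (t : tensor3) : tensor4 :=
  flatten [seq [seq (x.1.1, x.1.2, y.1, y.2) | y <- Delta x.2] | x <- t].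
Definition Delta_idid (t : tensor3) : tensor4 :=
  flatten [seq [seq (y.1, y.2, x.1.2, x.2) | y <- Delta x.1.1] | x <- t].
Definition id_Delta_id (t : tensor3) : tensor4 :=
  flatten [seq [seq (x.1.1, y.1, y.2, x.2) | y <- Delta x.1.2] | x <- t].

Definition one_tensor3 (t : tensor3) : tensor4 :=
  [seq (1, x.1.1, x.1.2, x.2) | x <- t].
Definition tensor3_one (t : tensor3) : tensor4 :=
  [seq (x.1.1, x.1.2, x.2, 1) | x <- t].

End Tensors.

Section QuasiHopf.
Variable k : fieldType.

Definition is_alg_map (A B : algType k) (f : A -> B) : Prop :=
  [/\ klinear f, forall x y, f (x * y) = f x * f y & f 1 = 1].

Definition is_anti_alg_endo (A : algType k) (S : A -> A) : Prop :=
  [/\ klinear S, forall x y, S (x * y) = S y * S x & S 1 = 1].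

Definition is_alg_char (A : algType k) (eps : A -> k) : Prop :=
  [/\ forall (a : k) (x y : A), eps (a *: x + y) = a * eps x + eps y,
      forall x y, eps (x * y) = eps x * eps y & eps 1 = 1].

(* (A, Delta, eps, phi) is a quasibialgebra; phiinv is the inverse of phi
   in A^{(x)3} (so phi is invertible, and phiinv is phi^{-1}). *)
Definition is_quasibialgebra (A : algType k) (Delta : A -> tensor2 A)
    (eps : A -> k) (phi phiinv : tensor3 A) : Prop :=
  (
      (forall (a : k) (x y : A),
          teq2 (Delta (a *: x + y)) (tadd2 (tscale2 a (Delta x)) (Delta y))) /\
      (forall x y, teq2 (Delta (x * y)) (tmul2 (Delta x) (Delta y))) /\
      teq2 (Delta 1) (tone2 A)) /\
  is_alg_char eps /\
  (forall h, \sum_(x <- Delta h) eps x.1 *: x.2 = h /\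
             \sum_(x <- Delta h) eps x.2 *: x.1 = h) /\
  (forall h, teq3 (tmul3 (id_Delta Delta (Delta h)) phi)
                  (tmul3 phi (Delta_id Delta (Delta h)))) /\
  teq4 (tmul4 (idid_Delta Delta phi) (Delta_idid Delta phi))
       (tmul4 (tmul4 (one_tensor3 phi) (id_Delta_id Delta phi))
              (tensor3_one phi)) /\
  teq2 [seq (eps x.1.2 *: x.1.1, x.2) | x <- phi] (tone2 A) /\
  (teq3 (tmul3 phi phiinv) (tone3 A) /\ teq3 (tmul3 phiinv phi) (tone3 A)).

Definition is_quasibialg_morphism (A B : algType k)
    (DeltaA : A -> tensor2 A) (epsA : A -> k) (phiA : tensor3 A)
    (DeltaB : B -> tensor2 B) (epsB : B -> k) (phiB : tensor3 B)
    (f : A -> B) : Prop :=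
  [/\ is_alg_map f,
      (forall h, teq2 (DeltaB (f h)) [seq (f x.1, f x.2) | x <- DeltaA h]),
      (forall h, epsB (f h) = epsA h) &
      teq3 [seq (f x.1.1, f x.1.2, f x.2) | x <- phiA] phiB].

Definition is_quasi_antipode (A : algType k) (Delta : A -> tensor2 A)
    (eps : A -> k) (phi phiinv : tensor3 A) (S : A -> A) (alpha beta : A)
    : Prop :=
  [/\ is_anti_alg_endo S,
      (forall h, \sum_(x <- Delta h) S x.1 * alpha * x.2 = eps h *: alpha),
      (forall h, \sum_(x <- Delta h) x.1 * beta * S x.2 = eps h *: beta),
      \sum_(x <- phi) x.1.1 * beta * S x.1.2 * alpha * x.2 = 1 &
      \sum_(x <- phiinv) S x.1.1 * alpha * x.1.2 * beta * S x.2 = 1].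

Definition is_quasiHopf_morphism (A B : algType k)
    (DeltaA : A -> tensor2 A) (epsA : A -> k) (phiA : tensor3 A)
    (SA : A -> A) (alphaA betaA : A)
    (DeltaB : B -> tensor2 B) (epsB : B -> k) (phiB : tensor3 B)
    (SB : B -> B) (alphaB betaB : B) (f : A -> B) : Prop :=
  [/\ is_quasibialg_morphism DeltaA epsA phiA DeltaB epsB phiB f,
      (forall h, SB (f h) = f (SA h)),
      f alphaA = alphaB & f betaA = betaB].

End QuasiHopf.

From HB Require Import structures.
From mathcomp Require Import all_boot all_algebra.
From mathcomp Require Import falgebra.
Set Implicit Arguments.
Unset Strict Implicit.
Unset Printing Implicit Defensive.
Import GRing.Theory.
Local Open Scope ring_scope.

(* Let p_R = p^1 (x) p^2 be the Hausser-Nill element of H.  Transforming a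
   bilinear form b on Q into (u, v) |-> sum b(u_(1) nu(p^1), u_(2) nu(p^2) v) is a
   linear endomorphism of a finite-dimensional space.  It is injective, since the
   identity Delta(x^1 h_(1)) p_R (1 (x) S(h_(2)) S(x^2) alpha x^3) = h (x) 1, for
   x = phi, recovers b(nu h, -) from the transform; so it is onto.  Take b whose
   transform is eps (x) l for a linear form l.  Evaluating the transform on
   nu h_(1) (x) nu S(h_(2)) and summing gives l(nu S(h)) by the counit axiom, and
   sum b(nu(p^1 h), nu p^2) by Delta(h_(1)) p_R (1 (x) S(h_(2))) = p_R (h (x) 1);
   the latter vanishes when nu h = 0.  Hence S(ker nu) is in ker nu, and the
   quasi-antipode axioms descend along the surjection nu. *)

Section KLinear.
Variable k : fieldType.
Implicit Types U V W : lmodType k.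

Lemma klinear0 U W (f : U -> W) : klinear f -> f 0 = 0.
Proof.
move=> hf; have := hf 1 0 0; rewrite !scale1r addr0 => h.
exact: esym (addrI _ (etrans (addr0 _) h)).
Qed.

Lemma klinearD U W (f : U -> W) : klinear f -> forall x y, f (x + y) = f x + f y.
Proof. by move=> hf x y; have := hf 1 x y; rewrite !scale1r. Qed.

Lemma klinearZ U W (f : U -> W) : klinear f -> forall a x, f (a *: x) = a *: f x.
Proof. by move=> hf a x; rewrite -[a *: x]addr0 hf (klinear0 hf) addr0. Qed.

Lemma klinearB U W (f : U -> W) : klinear f -> forall x y, f (x - y) = f x - f y.
Proof. by move=> hf x y; rewrite klinearD // -scaleN1r klinearZ // scaleN1r. Qed.

Lemma klinear_sum U W (f : U -> W) : klinear f ->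
  forall I (r : seq I) (F : I -> U), f (\sum_(i <- r) F i) = \sum_(i <- r) f (F i).
Proof.
move=> hf I r F; elim: r => [|x r IH]; first by rewrite !big_nil klinear0.
by rewrite !big_cons klinearD // IH.
Qed.

Lemma klinear_id U : klinear (fun x : U => x). Proof. by []. Qed.

Lemma klinear_comp U V W (f : U -> V) (g : V -> W) :
  klinear f -> klinear g -> klinear (fun x => g (f x)).
Proof. by move=> hf hg a x y; rewrite hf hg. Qed.

Lemma sum_klinear U W I (r : seq I) (F : I -> U -> W) :
  (forall i, klinear (F i)) -> klinear (fun x => \sum_(i <- r) F i x).
Proof.
by move=> hF a x y; rewrite scaler_sumr -big_split; apply: eq_bigr => i _; apply: hF.
Qed.

Lemma klinear_scale U (c : k) : klinear (fun x : U => c *: x).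
Proof. by move=> a x y; rewrite scalerDr !scalerA mulrC. Qed.

Lemma klinear_scalel U W (g : U -> k) (w : W) :
  (forall a x y, g (a *: x + y) = a * g x + g y) -> klinear (fun x => g x *: w).
Proof. by move=> hg a x y; rewrite hg scalerDl scalerA. Qed.

Variable A : algType k.

Lemma klinear_mull (a : A) : klinear (fun x : A => a * x).
Proof. by move=> c x y; rewrite mulrDr scalerAr. Qed.

Lemma klinear_mulr (a : A) : klinear (fun x : A => x * a).
Proof. by move=> c x y; rewrite mulrDl scalerAl. Qed.

End KLinear.

(* Proves [klinear (fun x => E)] for [E] built from [x] by sums, products,
   scalings and maps whose linearity in the relevant argument is a hypothesis
   (or section [Let]) of the context. *)
Ltac klinear_leaf :=
  first [ exact: klinear_id | exact: klinear_mull | exact: klinear_mulr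
        | exact: klinear_scale | apply: klinear_scalel; assumption
        | match goal with h : _ |- _ => exact: h end ].

Ltac linearity :=
  cbv beta;
  first
  [ klinear_leaf
  | apply: sum_klinear => ?; linearity
  | match goal with
    | |- klinear (fun x => ?g (@?f x)) =>
        apply: (klinear_comp (f := f) (g := g)); [linearity | klinear_leaf]
    | |- klinear (fun x => ?g (@?f x) ?b) =>
        apply: (klinear_comp (f := f) (g := fun y => g y b)); [linearity | klinear_leaf]
    | |- klinear (fun x => ?g (@?f x) ?b ?c) =>
        apply: (klinear_comp (f := f) (g := fun y => g y b c)); [linearity | klinear_leaf]
    | |- klinear (fun x => ?g (@?f x) ?b ?c ?d) =>
        apply: (klinear_comp (f := f) (g := fun y => g y b c d)); [linearity | klinear_leaf]
    end ].


Section EquivMonoid.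
Variables (T : Type) (eqv : T -> T -> Prop) (mul : T -> T -> T) (one : T).
Hypotheses (eqv_sym : forall x y, eqv x y -> eqv y x)
  (eqv_trans : forall x y z, eqv x y -> eqv y z -> eqv x z)
  (mulA : forall x y z, eqv (mul x (mul y z)) (mul (mul x y) z))
  (one_mul : forall x, eqv (mul one x) x) (mul_one : forall x, eqv (mul x one) x)
  (mul_congrl : forall x x' y, eqv x x' -> eqv (mul x y) (mul x' y))
  (mul_congrr : forall x y y', eqv y y' -> eqv (mul x y) (mul x y')).

Lemma eqv_conj a b c d x y :
  eqv (mul a x) (mul y c) -> eqv (mul b a) one -> eqv (mul c d) one ->
  eqv (mul x d) (mul b y).
Proof.
move=> axyc ba1 cd1.
apply: (eqv_trans (mul_congrl _ (eqv_sym (one_mul x)))).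
apply: (eqv_trans (mul_congrl _ (mul_congrl _ (eqv_sym ba1)))).
apply: (eqv_trans (mul_congrl _ (eqv_sym (mulA _ _ _)))).
apply: (eqv_trans (mul_congrl _ (mul_congrr _ axyc))).
apply: (eqv_trans (mul_congrl _ (mulA _ _ _))).
apply: (eqv_trans (eqv_sym (mulA _ _ _))).
by apply: (eqv_trans (mul_congrr _ cd1)).
Qed.

End EquivMonoid.

Section Tensors.
Variables (k : fieldType) (A : algType k).
Implicit Types (W : lmodType k).

Lemma big_tmul2 W (F : A * A -> W) (t u : tensor2 A) :
  \sum_(x <- tmul2 t u) F x = \sum_(x <- t) \sum_(y <- u) F (x.1 * y.1, x.2 * y.2).
Proof. exact: big_allpairs_dep. Qed.

Lemma big_tmul3 W (F : A * A * A -> W) (t u : tensor3 A) :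
  \sum_(x <- tmul3 t u) F x =
  \sum_(x <- t) \sum_(y <- u) F (x.1.1 * y.1.1, x.1.2 * y.1.2, x.2 * y.2).
Proof. exact: big_allpairs_dep. Qed.

Lemma big_tmul4 W (F : A * A * A * A -> W) (t u : tensor4 A) :
  \sum_(x <- tmul4 t u) F x = \sum_(x <- t) \sum_(y <- u)
    F (x.1.1.1 * y.1.1.1, x.1.1.2 * y.1.1.2, x.1.2 * y.1.2, x.2 * y.2).
Proof. exact: big_allpairs_dep. Qed.

Variable Delta : A -> tensor2 A.

Lemma big_id_Delta W (F : A * A * A -> W) (t : tensor2 A) :
  \sum_(x <- id_Delta Delta t) F x =
  \sum_(x <- t) \sum_(y <- Delta x.2) F (x.1, y.1, y.2).
Proof. by rewrite big_flatten big_map; apply: eq_bigr => x _; rewrite big_map. Qed.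

Lemma big_Delta_id W (F : A * A * A -> W) (t : tensor2 A) :
  \sum_(x <- Delta_id Delta t) F x =
  \sum_(x <- t) \sum_(y <- Delta x.1) F (y.1, y.2, x.2).
Proof. by rewrite big_flatten big_map; apply: eq_bigr => x _; rewrite big_map. Qed.

Lemma big_idid_Delta W (F : A * A * A * A -> W) (t : tensor3 A) :
  \sum_(x <- idid_Delta Delta t) F x =
  \sum_(x <- t) \sum_(y <- Delta x.2) F (x.1.1, x.1.2, y.1, y.2).
Proof. by rewrite big_flatten big_map; apply: eq_bigr => x _; rewrite big_map. Qed.

Lemma big_Delta_idid W (F : A * A * A * A -> W) (t : tensor3 A) :
  \sum_(x <- Delta_idid Delta t) F x =
  \sum_(x <- t) \sum_(y <- Delta x.1.1) F (y.1, y.2, x.1.2, x.2).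
Proof. by rewrite big_flatten big_map; apply: eq_bigr => x _; rewrite big_map. Qed.

Lemma big_id_Delta_id W (F : A * A * A * A -> W) (t : tensor3 A) :
  \sum_(x <- id_Delta_id Delta t) F x =
  \sum_(x <- t) \sum_(y <- Delta x.1.2) F (x.1.1, y.1, y.2, x.2).
Proof. by rewrite big_flatten big_map; apply: eq_bigr => x _; rewrite big_map. Qed.

Definition tone4 : tensor4 A := [:: (1, 1, 1, 1)].

Lemma teq3_sym (t u : tensor3 A) : teq3 t u -> teq3 u t.
Proof. by move=> h W m hm; rewrite h. Qed.

Lemma teq3_trans (t u v : tensor3 A) : teq3 t u -> teq3 u v -> teq3 t v.
Proof. by move=> h1 h2 W m hm; rewrite h1 // h2. Qed.

Lemma teq4_sym (t u : tensor4 A) : teq4 t u -> teq4 u t.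
Proof. by move=> h W m hm; rewrite h. Qed.

Lemma teq4_trans (t u v : tensor4 A) : teq4 t u -> teq4 u v -> teq4 t v.
Proof. by move=> h1 h2 W m hm; rewrite h1 // h2. Qed.

Lemma tmul3A (t u v : tensor3 A) : teq3 (tmul3 t (tmul3 u v)) (tmul3 (tmul3 t u) v).
Proof.
move=> W m _; rewrite /tmul3 !big_allpairs_dep; apply: eq_bigr => x _.
rewrite !big_allpairs_dep; apply: eq_bigr => y _; apply: eq_bigr => z _.
by rewrite /= !mulrA.
Qed.

Lemma tmul4A (t u v : tensor4 A) : teq4 (tmul4 t (tmul4 u v)) (tmul4 (tmul4 t u) v).
Proof.
move=> W m _; rewrite /tmul4 !big_allpairs_dep; apply: eq_bigr => x _.
rewrite !big_allpairs_dep; apply: eq_bigr => y _; apply: eq_bigr => z _.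
by rewrite /= !mulrA.
Qed.

Lemma tmul1t3 (t : tensor3 A) : teq3 (tmul3 (tone3 A) t) t.
Proof.
by move=> W m _; rewrite big_tmul3 big_seq1; apply: eq_bigr => x _; rewrite /= !mul1r.
Qed.

Lemma tmul3t1 (t : tensor3 A) : teq3 (tmul3 t (tone3 A)) t.
Proof.
by move=> W m _; rewrite big_tmul3; apply: eq_bigr => x _; rewrite big_seq1 /= !mulr1.
Qed.

Lemma tmul1t4 (t : tensor4 A) : teq4 (tmul4 tone4 t) t.
Proof.
by move=> W m _; rewrite big_tmul4 big_seq1; apply: eq_bigr => x _; rewrite /= !mul1r.
Qed.

Lemma tmul4t1 (t : tensor4 A) : teq4 (tmul4 t tone4) t.
Proof.
by move=> W m _; rewrite big_tmul4; apply: eq_bigr => x _; rewrite big_seq1 /= !mulr1.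
Qed.

Lemma tmul3_congrl (t t' u : tensor3 A) : teq3 t t' -> teq3 (tmul3 t u) (tmul3 t' u).
Proof.
move=> h W m [m1 m2 m3]; rewrite !big_tmul3.
apply: (h W (fun a b c => \sum_(y <- u) m (a * y.1.1) (b * y.1.2) (c * y.2))).
by split=> *; linearity.
Qed.

Lemma tmul3_congrr (t u u' : tensor3 A) : teq3 u u' -> teq3 (tmul3 t u) (tmul3 t u').
Proof.
move=> h W m [m1 m2 m3]; rewrite !big_tmul3; apply: eq_bigr => x _.
apply: (h W (fun a b c => m (x.1.1 * a) (x.1.2 * b) (x.2 * c))).
by split=> *; linearity.
Qed.

Lemma tmul4_congrl (t t' u : tensor4 A) : teq4 t t' -> teq4 (tmul4 t u) (tmul4 t' u).
Proof.
move=> h W m [m1 m2 m3 m4]; rewrite !big_tmul4.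
apply: (h W (fun a b c d =>
  \sum_(y <- u) m (a * y.1.1.1) (b * y.1.1.2) (c * y.1.2) (d * y.2))).
by split=> *; linearity.
Qed.

Lemma tmul4_congrr (t u u' : tensor4 A) : teq4 u u' -> teq4 (tmul4 t u) (tmul4 t u').
Proof.
move=> h W m [m1 m2 m3 m4]; rewrite !big_tmul4; apply: eq_bigr => x _.
apply: (h W (fun a b c d => m (x.1.1.1 * a) (x.1.1.2 * b) (x.1.2 * c) (x.2 * d))).
by split=> *; linearity.
Qed.

Lemma teq3_conj (a b c d x y : tensor3 A) :
  teq3 (tmul3 a x) (tmul3 y c) -> teq3 (tmul3 b a) (tone3 A) ->
  teq3 (tmul3 c d) (tone3 A) -> teq3 (tmul3 x d) (tmul3 b y).
Proof.
exact: (eqv_conj teq3_sym teq3_trans tmul3A tmul1t3 tmul3t1 tmul3_congrl tmul3_congrr).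
Qed.

Lemma teq4_conj (a b c d x y : tensor4 A) :
  teq4 (tmul4 a x) (tmul4 y c) -> teq4 (tmul4 b a) tone4 ->
  teq4 (tmul4 c d) tone4 -> teq4 (tmul4 x d) (tmul4 b y).
Proof.
exact: (eqv_conj teq4_sym teq4_trans tmul4A tmul1t4 tmul4t1 tmul4_congrl tmul4_congrr).
Qed.

End Tensors.

Section QuasiBialgebra.
Variables (k : fieldType) (A : algType k).
Variables (D : A -> tensor2 A) (e : A -> k) (p pi : tensor3 A).
Hypothesis qb : is_quasibialgebra D e p pi.
Implicit Types W : lmodType k.

Lemma klinear_Delta W (m : A -> A -> W) :
  multilin2 m -> klinear (fun h => \sum_(x <- D h) m x.1 x.2).
Proof.
move=> [m1 m2] a x y; case: qb => [[hD _] _]; rewrite (hD a x y W m) //.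
rewrite /tadd2 /tscale2 big_cat big_map scaler_sumr; congr (_ + _).
by apply: eq_bigr => z _; rewrite /= (klinearZ (m1 _)).
Qed.

Lemma big_DeltaM W (m : A -> A -> W) x y : multilin2 m ->
  \sum_(z <- D (x * y)) m z.1 z.2 =
  \sum_(z <- D x) \sum_(w <- D y) m (z.1 * w.1) (z.2 * w.2).
Proof. by move=> hm; case: qb => [[_ [hM _]] _]; rewrite (hM x y W m hm) big_tmul2. Qed.

Lemma big_Delta1 W (m : A -> A -> W) : multilin2 m -> \sum_(z <- D 1) m z.1 z.2 = m 1 1.
Proof. by move=> hm; case: qb => [[_ [_ h1]] _]; rewrite (h1 W m hm) big_seq1. Qed.

Lemma eps_lin a x y : e (a *: x + y) = a * e x + e y. Proof. by case: qb => _ [[]]. Qed.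
Lemma epsM x y : e (x * y) = e x * e y. Proof. by case: qb => _ [[]]. Qed.
Lemma eps1 : e 1 = 1. Proof. by case: qb => _ [[]]. Qed.

Lemma counitl W (g : A -> W) h : klinear g -> \sum_(x <- D h) e x.1 *: g x.2 = g h.
Proof.
move=> hg; case: qb => _ [_ [/(_ h)[hc _] _]].
by rewrite -{2}hc klinear_sum //; apply: eq_bigr => x _; rewrite (klinearZ hg).
Qed.

Lemma counitr W (g : A -> W) h : klinear g -> \sum_(x <- D h) e x.2 *: g x.1 = g h.
Proof.
move=> hg; case: qb => _ [_ [/(_ h)[_ hc] _]].
by rewrite -{2}hc klinear_sum //; apply: eq_bigr => x _; rewrite (klinearZ hg).
Qed.

Lemma quasi_coassoc h :
  teq3 (tmul3 (id_Delta D (D h)) p) (tmul3 p (Delta_id D (D h))).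
Proof. by case: qb => _ [_ [_ []]]. Qed.

Lemma pentagon : teq4 (tmul4 (idid_Delta D p) (Delta_idid D p))
  (tmul4 (tmul4 (one_tensor3 p) (id_Delta_id D p)) (tensor3_one p)).
Proof. by case: qb => _ [_ [_ [_ []]]]. Qed.

Lemma normalization W (m : A -> A -> W) : multilin2 m ->
  \sum_(x <- p) e x.1.2 *: m x.1.1 x.2 = m 1 1.
Proof.
move=> hm; case: qb => _ [_ [_ [_ [_ [/(_ W m hm) hn _]]]]].
rewrite big_map big_seq1 /= in hn; rewrite -hn; apply: eq_bigr => x _.
by case: hm => m1 _; rewrite (klinearZ (m1 _)).
Qed.

Lemma phi_phiinv : teq3 (tmul3 p pi) (tone3 A).
Proof. by case: qb => _ [_ [_ [_ [_ [_ []]]]]]. Qed.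

Lemma phiinv_phi : teq3 (tmul3 pi p) (tone3 A).
Proof. by case: qb => _ [_ [_ [_ [_ [_ []]]]]]. Qed.

Lemma quasi_coassoc_inv h :
  teq3 (tmul3 (Delta_id D (D h)) pi) (tmul3 pi (id_Delta D (D h))).
Proof. exact: teq3_conj (teq3_sym (quasi_coassoc h)) phiinv_phi phi_phiinv. Qed.

Let eps_klinear := eps_lin.

Lemma pentagon_lhs_eps3 W (g : A -> A -> A -> W) : multilin3 g ->
  \sum_(x <- tmul4 (idid_Delta D p) (Delta_idid D p))
     g x.1.1.1 x.1.1.2 (e x.1.2 *: x.2) = \sum_(x <- p) g x.1.1 x.1.2 x.2.
Proof.
move=> [g1 g2 g3].
rewrite big_tmul4 big_idid_Delta; apply: eq_bigr => i _ /=.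
under eq_bigr do rewrite big_Delta_idid /=.
transitivity (\sum_(y <- D i.2) e y.1 *: \sum_(x <- p) \sum_(z <- D x.1.1)
    g (i.1.1 * z.1) (i.1.2 * z.2) (e x.1.2 *: (y.2 * x.2))).
  apply: eq_bigr => y _; rewrite scaler_sumr; apply: eq_bigr => x _.
  rewrite scaler_sumr; apply: eq_bigr => z _.
  by rewrite epsM -scalerA (klinearZ (g3 _ _)).
rewrite (counitl (g := fun w => \sum_(x <- p) \sum_(z <- D x.1.1)
    g (i.1.1 * z.1) (i.1.2 * z.2) (e x.1.2 *: (w * x.2)))); last by linearity.
have hm : multilin2 (fun a d =>
    \sum_(z <- D a) g (i.1.1 * z.1) (i.1.2 * z.2) (i.2 * d)).
  split=> [d|a]; last by linearity.
  by apply: (klinear_Delta (m := fun a b => g (i.1.1 * a) (i.1.2 * b) (i.2 * d)));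
     split=> *; linearity.
have := normalization hm.
rewrite /= (big_Delta1 (m := fun a b => g (i.1.1 * a) (i.1.2 * b) (i.2 * 1)));
  last by split=> *; linearity.
rewrite !mulr1 => <-; apply: eq_bigr => x _; rewrite scaler_sumr.
by apply: eq_bigr => z _; rewrite (klinearZ (g3 _ _)).
Qed.

Lemma pentagon_rhs_eps3 W (g : A -> A -> A -> W) : multilin3 g ->
  \sum_(x <- tmul4 (tmul4 (one_tensor3 p) (id_Delta_id D p)) (tensor3_one p))
     g x.1.1.1 x.1.1.2 (e x.1.2 *: x.2) =
  \sum_(z <- p) \sum_(x <- p) e x.2 *: g (z.1.1 * x.1.1) (z.1.2 * x.1.2) z.2.
Proof.
move=> [g1 g2 g3].
have hm : multilin2 (fun a d => \sum_(z <- p) \sum_(x <- p)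
    e x.2 *: g (z.1.1 * x.1.1) (a * z.1.2 * x.1.2) (d * z.2)).
  by split=> *; linearity.
have := normalization hm; under [RHS]eq_bigr do under eq_bigr do rewrite !mul1r.
move=> <-; rewrite big_tmul4 big_tmul4 /one_tensor3 big_map; apply: eq_bigr => Y _.
rewrite big_id_Delta_id scaler_sumr; apply: eq_bigr => Z _.
rewrite exchange_big /tensor3_one big_map scaler_sumr; apply: eq_bigr => x _ /=.
rewrite -(counitr (g := fun b => e Y.1.2 *: (e x.2 *:
  g (Z.1.1 * x.1.1) (Y.1.1 * b * x.1.2) (Y.2 * Z.2))) Z.1.2); last by linearity.
apply: eq_bigr => w _; rewrite !mul1r mulr1 !epsM -!scalerA.
by rewrite !(klinearZ (g3 _ _)) !scalerA (mulrC (e Y.1.2)).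
Qed.

Definition eps3 (t : tensor3 A) : tensor3 A :=
  [seq (x.1.1, e x.2 *: x.1.2, 1) | x <- t].

Lemma phi_mul_eps3 : teq3 p (tmul3 p (eps3 p)).
Proof.
move=> W g hg; case: (hg) => g1 g2 g3.
have h4 : multilin4 (fun a b c d => g a b (e c *: d)) by split=> *; linearity.
have := pentagon h4; rewrite /= pentagon_lhs_eps3 // pentagon_rhs_eps3 // => ->.
rewrite big_tmul3; apply: eq_bigr => z _; rewrite big_map; apply: eq_bigr => x _ /=.
by rewrite mulr1 -scalerAr (klinearZ (g2 _ _)).
Qed.

Lemma eps3_phi : teq3 (eps3 p) (tone3 A).
Proof.
apply: teq3_trans (teq3_sym (tmul3t1 _)) _; apply: teq3_trans phiinv_phi.
apply: teq3_conj phiinv_phi (tmul3t1 _).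
exact: teq3_trans (teq3_sym phi_mul_eps3) (teq3_sym (tmul3t1 _)).
Qed.

Lemma big_phi_eps3 W (g : A -> A -> W) : multilin2 g ->
  \sum_(x <- p) e x.2 *: g x.1.1 x.1.2 = g 1 1.
Proof.
move=> [g1 g2].
have hm : multilin3 (fun a b c => e c *: g a b) by split=> *; linearity.
have := eps3_phi hm; rewrite big_map big_seq1 /= eps1 scale1r => <-.
by apply: eq_bigr => x _; rewrite scale1r (klinearZ (g2 _)).
Qed.

Lemma big_phiinv_eps3 W (g : A -> A -> W) : multilin2 g ->
  \sum_(x <- pi) e x.2 *: g x.1.1 x.1.2 = g 1 1.
Proof.
move=> [g1 g2].
have hm : multilin3 (fun a b c => e c *: g a b) by split=> *; linearity.
have := phi_phiinv hm; rewrite big_tmul3 big_seq1 /= eps1 scale1r => <-.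
rewrite exchange_big; apply: eq_bigr => t _ /=.
have hm2 : multilin2 (fun a b => g (a * t.1.1) (b * t.1.2)) by split=> *; linearity.
have := big_phi_eps3 hm2; rewrite /= !mul1r => <-; rewrite scaler_sumr.
by apply: eq_bigr => x _; rewrite epsM mulrC scalerA.
Qed.

Lemma idid_Delta_phiinv_phi :
  teq4 (tmul4 (idid_Delta D pi) (idid_Delta D p)) (tone4 A).
Proof.
move=> W m [m1 m2 m3 m4]; rewrite big_tmul4 big_seq1 /=.
under eq_bigr do rewrite big_idid_Delta /=.
rewrite big_idid_Delta /=.
have hm : multilin3 (fun a b c => \sum_(v <- D c) m a b v.1 v.2).
  split=> *; [linearity | linearity |].
  by apply: (klinear_Delta (m := fun x y => m _ _ x y)); split=> *; linearity.
have := phiinv_phi hm; rewrite big_tmul3 big_seq1 /=.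
rewrite (big_Delta1 (m := fun x y => m 1 1 x y)); last by split=> *; linearity.
move=> <-; apply: eq_bigr => r _; rewrite exchange_big; apply: eq_bigr => x _ /=.
by rewrite (big_DeltaM (m := fun a b => m (r.1.1 * x.1.1) (r.1.2 * x.1.2) a b)).
Qed.

Lemma tensor3_one_phi_phiinv :
  teq4 (tmul4 (tensor3_one p) (tensor3_one pi)) (tone4 A).
Proof.
move=> W m [m1 m2 m3 m4]; rewrite big_tmul4 big_seq1 /=.
have hm : multilin3 (fun a b c => m a b c 1) by split=> *; linearity.
have := phi_phiinv hm; rewrite big_tmul3 big_seq1 /= => <-.
rewrite big_map; apply: eq_bigr => x _; rewrite big_map.
by apply: eq_bigr => t _ /=; rewrite mulr1.
Qed.

Lemma pentagon_inv : teq4 (tmul4 (Delta_idid D p) (tensor3_one pi))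
  (tmul4 (tmul4 (idid_Delta D pi) (one_tensor3 p)) (id_Delta_id D p)).
Proof.
apply: teq4_trans (tmul4A _ _ _).
exact: teq4_conj pentagon idid_Delta_phiinv_phi tensor3_one_phi_phiinv.
Qed.

End QuasiBialgebra.

Section QuasiHopf.
Variables (k : fieldType) (A : algType k).
Variables (D : A -> tensor2 A) (e : A -> k) (p pi : tensor3 A).
Variables (S : A -> A) (al be : A).
Hypothesis qb : is_quasibialgebra D e p pi.
Hypothesis qa : is_quasi_antipode D e p pi S al be.
Implicit Types W : lmodType k.

Lemma antipode_lin : klinear S. Proof. by case: qa => [[]]. Qed.
Lemma antipodeM x y : S (x * y) = S y * S x. Proof. by case: qa => [[]]. Qed.
Lemma antipode1 : S 1 = 1. Proof. by case: qa => [[]]. Qed.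

Let S_klinear := antipode_lin.

Lemma antipode_alpha W (g : A -> W) h : klinear g ->
  \sum_(x <- D h) g (S x.1 * al * x.2) = e h *: g al.
Proof. by move=> hg; case: qa => _ ha _ _ _; rewrite -klinear_sum // ha klinearZ. Qed.

Lemma antipode_beta W (g : A -> W) h : klinear g ->
  \sum_(x <- D h) g (x.1 * be * S x.2) = e h *: g be.
Proof. by move=> hg; case: qa => _ _ hb _ _; rewrite -klinear_sum // hb klinearZ. Qed.

Lemma antipode_phi W (g : A -> W) : klinear g ->
  \sum_(x <- p) g (x.1.1 * be * S x.1.2 * al * x.2) = g 1.
Proof. by move=> hg; case: qa => _ _ _ hp _; rewrite -klinear_sum // hp. Qed.

Definition pR : tensor2 A := [seq (t.1.1, t.1.2 * be * S t.2) | t <- pi].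

Lemma pR_Delta W (f : A -> A -> W) x : multilin2 f ->
  \sum_(s <- D x) \sum_(u <- D s.1) \sum_(r <- pR) f (u.1 * r.1) (u.2 * r.2 * S s.2)
  = \sum_(r <- pR) f (r.1 * x) r.2.
Proof.
move=> [f1 f2].
have hF : multilin3 (fun a b c => f a (b * be * S c)) by split=> *; linearity.
rewrite /pR big_map.
transitivity (\sum_(i <- tmul3 (Delta_id D (D x)) pi) f i.1.1 (i.1.2 * be * S i.2)).
  rewrite big_tmul3 big_Delta_id; apply: eq_bigr => s _; apply: eq_bigr => u _.
  by rewrite big_map; apply: eq_bigr => t _; rewrite /= antipodeM !mulrA.
rewrite (quasi_coassoc_inv qb x hF) big_tmul3; apply: eq_bigr => t _.
rewrite big_id_Delta /=.
transitivity (\sum_(s <- D x) e s.2 *: f (t.1.1 * s.1) (t.1.2 * be * S t.2)).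
  apply: eq_bigr => s _.
  rewrite -(antipode_beta (g := fun c => f (t.1.1 * s.1) (t.1.2 * c * S t.2)));
    last by linearity.
  by apply: eq_bigr => w _; rewrite antipodeM !mulrA.
by apply: (counitr qb (g := fun y => f (t.1.1 * y) _)); linearity.
Qed.

Lemma pR_phi_expand W (f : A -> A -> W) : multilin2 f ->
  \sum_(z <- p) \sum_(u <- D z.1.1) \sum_(r <- pR)
     f (u.1 * r.1) (u.2 * r.2 * S z.1.2 * al * z.2) =
  \sum_(r <- pi) \sum_(y <- D r.2) \sum_(Y <- p)
     f r.1.1 (r.1.2 * Y.1.1 * be * S Y.1.2 * S y.1 * al * y.2 * Y.2).
Proof.
move=> [f1 f2].
have hF : multilin4 (fun a b c d => f a (b * be * S c * al * d)) by split=> *; linearity.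
transitivity (\sum_(x <- tmul4 (Delta_idid D p) (tensor3_one pi))
                f x.1.1.1 (x.1.1.2 * be * S x.1.2 * al * x.2)).
  rewrite big_tmul4 big_Delta_idid; apply: eq_bigr => z _; apply: eq_bigr => u _.
  rewrite /pR !big_map; apply: eq_bigr => t _.
  by rewrite /= mulr1 antipodeM !mulrA.
rewrite (pentagon_inv qb hF) !big_tmul4 big_idid_Delta; apply: eq_bigr => r _.
apply: eq_bigr => y _; rewrite /one_tensor3 big_map; apply: eq_bigr => Y _.
rewrite big_id_Delta_id /=.
have hm : multilin2 (fun a d => f (r.1.1 * a)
    (r.1.2 * Y.1.1 * be * S Y.1.2 * S y.1 * al * y.2 * Y.2 * d)).
  by split=> *; linearity.
have := normalization qb hm; rewrite /= !mulr1 => <-.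
apply: eq_bigr => Z _; rewrite -(antipode_beta (g := fun b => f (r.1.1 * Z.1.1)
    (r.1.2 * Y.1.1 * b * S Y.1.2 * S y.1 * al * y.2 * Y.2 * Z.2))); last by linearity.
by apply: eq_bigr => w _; rewrite !antipodeM !mulrA.
Qed.

Lemma pR_phi W (f : A -> A -> W) : multilin2 f ->
  \sum_(z <- p) \sum_(u <- D z.1.1) \sum_(r <- pR)
     f (u.1 * r.1) (u.2 * r.2 * S z.1.2 * al * z.2) = f 1 1.
Proof.
move=> hf; rewrite pR_phi_expand //; case: hf => f1 f2.
transitivity (\sum_(r <- pi) \sum_(Y <- p)
    e r.2 *: f r.1.1 (r.1.2 * Y.1.1 * be * S Y.1.2 * al * Y.2)).
  apply: eq_bigr => r _; rewrite exchange_big; apply: eq_bigr => Y _ /=.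
  rewrite -(antipode_alpha (g := fun c =>
    f r.1.1 (r.1.2 * Y.1.1 * be * S Y.1.2 * c * Y.2))); last by linearity.
  by apply: eq_bigr => y _; rewrite !mulrA.
rewrite exchange_big -(antipode_phi (f2 1)); apply: eq_bigr => Y _ /=.
have hm : multilin2 (fun a b => f a (b * (Y.1.1 * be * S Y.1.2 * al * Y.2))).
  by split=> *; linearity.
rewrite -[X in f 1 X]mul1r -(big_phiinv_eps3 qb hm).
by apply: eq_bigr => r _; rewrite /= !mulrA.
Qed.

Lemma pR_recover W (f : A -> A -> W) h : multilin2 f ->
  \sum_(z <- p) \sum_(s <- D h) \sum_(u <- D (z.1.1 * s.1)) \sum_(r <- pR)
     f (u.1 * r.1) (u.2 * r.2 * S s.2 * S z.1.2 * al * z.2) = f h 1.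
Proof.
move=> hf; case: (hf) => f1 f2.
have hm : multilin2 (fun a b => f (a * h) b) by split=> *; linearity.
rewrite -[h in RHS]mul1r -(pR_phi hm); apply: eq_bigr => z _.
transitivity (\sum_(v <- D z.1.1) \sum_(s <- D h) \sum_(u <- D s.1) \sum_(r <- pR)
    f (v.1 * (u.1 * r.1)) (v.2 * (u.2 * r.2 * S s.2) * S z.1.2 * al * z.2)).
  rewrite [RHS]exchange_big; apply: eq_bigr => s _ /=.
  rewrite (big_DeltaM qb (m := fun a b => \sum_(r <- pR)
    f (a * r.1) (b * r.2 * S s.2 * S z.1.2 * al * z.2))); last by split=> *; linearity.
  apply: eq_bigr => v _; apply: eq_bigr => u _.
  by apply: eq_bigr => r _; rewrite !mulrA.
apply: eq_bigr => v _.
rewrite (pR_Delta (f := fun a b => f (v.1 * a) (v.2 * b * S z.1.2 * al * z.2)));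
  last by split=> *; linearity.
by apply: eq_bigr => r _; rewrite !mulrA.
Qed.

End QuasiHopf.

Lemma scale_regularE (R : pzSemiRingType) (a x : R^o) : a *: x = a * x.
Proof. by []. Qed.

Section FormMatrix.
Variables (k : fieldType) (V : falgType k).
Local Notation n := (\dim {:V}).
Local Notation b := (vbasis {:V}).

Definition mx_form (M : 'M[k]_n) (u v : V) : k^o :=
  \sum_i \sum_j coord b i u * coord b j v * M i j.

Lemma mx_form_multilin M : multilin2 (mx_form M).
Proof.
split=> [v|u] c x y; rewrite /mx_form scale_regularE mulr_sumr -big_split;
  apply: eq_bigr => i _ /=; rewrite mulr_sumr -big_split;
  apply: eq_bigr => j _ /=; rewrite linearD linearZ /=.
  by rewrite !mulrDl !mulrA.
by rewrite mulrDr mulrDl !mulrA [_ * c]mulrC.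
Qed.

Lemma coord_vbasis_eq (i j : 'I_n) : coord b j b`_i = (i == j)%:R.
Proof. by rewrite coord_free //; case/andP: (vbasisP {:V}). Qed.

Lemma mx_form_vbasis M (i j : 'I_n) : mx_form M b`_i b`_j = M i j.
Proof.
rewrite /mx_form (bigD1 i) //= [X in _ + X]big1 => [|i' ne]; last first.
  by rewrite big1 // => j' _; rewrite (coord_vbasis_eq i i') eq_sym (negbTE ne) !mul0r.
rewrite addr0 (bigD1 j) //= [X in _ + X]big1 => [|j' ne]; last first.
  by rewrite (coord_vbasis_eq j j') eq_sym (negbTE ne) mulr0 mul0r.
by rewrite addr0 !coord_vbasis_eq !eqxx !mul1r.
Qed.

Lemma mx_formD c M M' u v :
  mx_form (c *: M + M') u v = c * mx_form M u v + mx_form M' u v.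
Proof.
rewrite /mx_form mulr_sumr -big_split; apply: eq_bigr => i _ /=.
rewrite mulr_sumr -big_split; apply: eq_bigr => j _ /=.
by rewrite !mxE mulrDr mulrCA.
Qed.

Lemma multilin2_expand (W : lmodType k) (g : V -> V -> W) u v : multilin2 g ->
  g u v = \sum_i \sum_j (coord b i u * coord b j v) *: g b`_i b`_j.
Proof.
move=> [g1 g2]; rewrite {1}(coord_vbasis (memvf u)) (klinear_sum (g1 _)).
apply: eq_bigr => i _; rewrite (klinearZ (g1 _)) {1}(coord_vbasis (memvf v)).
rewrite (klinear_sum (g2 _)) scaler_sumr; apply: eq_bigr => j _.
by rewrite (klinearZ (g2 _)) scalerA.
Qed.

End FormMatrix.

Lemma linear_inj_surj (k : fieldType) (V : vectType k) (f : {linear V -> V}) :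
  injective f -> forall v, exists u, f u = v.
Proof.
move=> f_inj v; have ker0 : lker (linfun f) == 0%VS.
  by apply/lker0P => x y; rewrite !lfunE; apply: f_inj.
have := memvf v; rewrite -(lker0_limgf ker0) => /memv_imgP [u _ ->].
by exists u; rewrite lfunE.
Qed.

Section QuotientQuasiHopf.
Variables (k : fieldType) (H : algType k) (Q : falgType k).
Variables (DH : H -> tensor2 H) (eH : H -> k) (pH piH : tensor3 H).
Variables (S : H -> H) (al be : H).
Variables (DQ : Q -> tensor2 Q) (eQ : Q -> k) (pQ piQ : tensor3 Q) (nu : H -> Q).
Hypothesis qbH : is_quasibialgebra DH eH pH piH.
Hypothesis qaH : is_quasi_antipode DH eH pH piH S al be.
Hypothesis qbQ : is_quasibialgebra DQ eQ pQ piQ.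
Hypothesis nu_mor : is_quasibialg_morphism DH eH pH DQ eQ pQ nu.
Hypothesis nu_surj : forall q : Q, exists h : H, nu h = q.
Implicit Types W : lmodType k.
Local Notation n := (\dim {:Q}).
Local Notation b := (vbasis {:Q}).

Lemma nu_lin : klinear nu. Proof. by case: nu_mor => [[]]. Qed.
Lemma nuM x y : nu (x * y) = nu x * nu y. Proof. by case: nu_mor => [[]]. Qed.
Lemma nu1 : nu 1 = 1. Proof. by case: nu_mor => [[]]. Qed.
Lemma eps_nu h : eQ (nu h) = eH h. Proof. by case: nu_mor. Qed.

Lemma big_Delta_nu W (m : Q -> Q -> W) h : multilin2 m ->
  \sum_(x <- DQ (nu h)) m x.1 x.2 = \sum_(x <- DH h) m (nu x.1) (nu x.2).
Proof. by move=> hm; case: nu_mor => _ hD _ _; rewrite (hD h W m hm) big_map. Qed.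

Let nu_klinear := nu_lin.
Let S_klinear := antipode_lin qaH.

(* Only nu (S _) enters, so this makes sense before S is known to descend to Q. *)
Definition pR_form (M : 'M[k]_n) (u v : Q) : k^o :=
  \sum_(w <- DQ u) \sum_(r <- pR piH S be) mx_form M (w.1 * nu r.1) (w.2 * nu r.2 * v).

Lemma pR_form_multilin M : multilin2 (pR_form M).
Proof.
have [f1 f2] := mx_form_multilin M; split=> [v|u]; last by linearity.
by apply: (klinear_Delta qbQ (m := fun w1 w2 => \sum_(r <- pR piH S be)
  mx_form M (w1 * nu r.1) (w2 * nu r.2 * v))); split=> *; linearity.
Qed.

Lemma pR_form_nu M h v : pR_form M (nu h) v = \sum_(u <- DH h) \sum_(r <- pR piH S be)
  mx_form M (nu u.1 * nu r.1) (nu u.2 * nu r.2 * v).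
Proof.
have [f1 f2] := mx_form_multilin M.
by apply: (big_Delta_nu (m := fun w1 w2 => \sum_(r <- pR piH S be)
  mx_form M (w1 * nu r.1) (w2 * nu r.2 * v))); split=> *; linearity.
Qed.

Definition pR_form_mx (M : 'M[k]_n) : 'M[k]_n := \matrix_(i, j) pR_form M b`_i b`_j.

Lemma pR_form_mx_linear : linear pR_form_mx.
Proof.
move=> c M M'; apply/matrixP => i j; rewrite !mxE /pR_form mulr_sumr -big_split.
apply: eq_bigr => w _; rewrite mulr_sumr -big_split.
by apply: eq_bigr => r _; rewrite mx_formD.
Qed.

HB.instance Definition _ :=
  GRing.isLinear.Build k 'M[k]_n 'M[k]_n *:%R pR_form_mx pR_form_mx_linear.

Lemma pR_form_mx_eq0 M : pR_form_mx M = 0 -> M = 0.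
Proof.
move=> hM.
have pR_form0 u v : pR_form M u v = 0.
  rewrite (multilin2_expand _ _ (pR_form_multilin M)) big1 // => i _.
  rewrite big1 // => j _; have := congr1 (fun N : 'M[k]_n => N i j) hM.
  by rewrite !mxE => ->; rewrite scaler0.
have form0 h w : mx_form M (nu h) w = 0.
  have [f1 f2] := mx_form_multilin M.
  have hf : multilin2 (fun a c => mx_form M (nu a) (nu c * w)) by split=> *; linearity.
  rewrite -[w]mul1r -nu1 -(pR_recover qbH qaH h hf); apply: big1 => z _.
  apply: big1 => s _; rewrite -[RHS](pR_form0 (nu (z.1.1 * s.1))
    (nu (S s.2 * S z.1.2 * al * z.2) * w)) pR_form_nu.
  by apply: eq_bigr => u _; apply: eq_bigr => r _; rewrite !nuM !mulrA.
apply/matrixP => i j; rewrite mxE -mx_form_vbasis.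
by have [h <-] := nu_surj b`_i; rewrite form0.
Qed.

Lemma pR_form_mx_inj : injective pR_form_mx.
Proof.
move=> M M' /eqP; rewrite -subr_eq0 -linearB => /eqP/pR_form_mx_eq0/eqP.
by rewrite subr_eq0 => /eqP.
Qed.

Lemma pR_form_eps_coord j0 :
  exists M, forall u v, pR_form M u v = eQ u * coord b j0 v.
Proof.
have [M hM] := linear_inj_surj pR_form_mx_inj (\matrix_(i, j) (eQ b`_i * (j == j0)%:R)).
exists M => u v.
have hR : multilin2 (fun u v => eQ u * coord b j0 v : k^o).
  split=> [v' c u1 u2|u' c v1 v2]; rewrite scale_regularE.
    by rewrite (eps_lin qbQ) mulrDl mulrA.
  by rewrite linearD linearZ /= mulrDr mulrCA.
rewrite (multilin2_expand _ _ (pR_form_multilin M)) (multilin2_expand _ _ hR).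
apply: eq_bigr => i _; apply: eq_bigr => j _.
have := congr1 (fun N : 'M[k]_n => N i j) hM; rewrite !mxE => ->.
by rewrite coord_vbasis_eq.
Qed.

Lemma nu_S_ker x : nu x = 0 -> nu (S x) = 0.
Proof.
move=> nux; rewrite (coord_vbasis (memvf (nu (S x)))) big1 // => j0 _.
have [M pR_formE] := pR_form_eps_coord j0.
have coord_klinear : klinear (coord b j0 : Q -> k^o).
  by move=> c u v; rewrite linearD linearZ.
have counit_side : \sum_(s <- DH x) pR_form M (nu s.1) (nu (S s.2)) = coord b j0 (nu (S x)).
  rewrite -(counitl qbH (g := fun y => coord b j0 (nu (S y)) : k^o));
    last by apply: klinear_comp coord_klinear; linearity.
  by apply: eq_bigr => s _; rewrite pR_formE eps_nu.
have pR_side : \sum_(s <- DH x) pR_form M (nu s.1) (nu (S s.2)) = 0.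
  have [f1 f2] := mx_form_multilin M.
  have hf : multilin2 (fun a c => mx_form M (nu a) (nu c)) by split=> *; linearity.
  transitivity (\sum_(r <- pR piH S be) mx_form M (nu (r.1 * x)) (nu r.2)).
    rewrite -(pR_Delta qbH qaH x hf); apply: eq_bigr => s _; rewrite pR_form_nu.
    by apply: eq_bigr => u _; apply: eq_bigr => r _; rewrite !nuM.
  by apply: big1 => r _; rewrite nuM nux mulr0 (klinear0 (f1 _)).
by rewrite -counit_side pR_side scale0r.
Qed.

Let nu_surjb q : exists h, nu h == q.
Proof. by have [h <-] := nu_surj q; exists h. Qed.

Definition Sbar (q : Q) : Q := nu (S (xchoose (nu_surjb q))).

Lemma SbarE h : Sbar (nu h) = nu (S h).
Proof.
have /eqP lift_h := xchooseP (nu_surjb (nu h)).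
apply/eqP; rewrite -subr_eq0 -(klinearB nu_lin) -(klinearB S_klinear).
by apply/eqP/nu_S_ker; rewrite (klinearB nu_lin) lift_h subrr.
Qed.

Lemma Sbar_anti : is_anti_alg_endo Sbar.
Proof.
split=> [c q q'|q q'|]; last by rewrite -nu1 SbarE (antipode1 qaH).
  have [[h <-] [h' <-]] := (nu_surj q, nu_surj q').
  by rewrite -(klinearZ nu_lin) -(klinearD nu_lin) !SbarE S_klinear nu_lin.
have [[h <-] [h' <-]] := (nu_surj q, nu_surj q').
by rewrite -nuM !SbarE (antipodeM qaH) nuM.
Qed.

Let Sbar_klinear : klinear Sbar. Proof. by case: Sbar_anti. Qed.

Lemma big_phi_nu W (m : Q -> Q -> Q -> W) : multilin3 m ->
  \sum_(x <- pQ) m x.1.1 x.1.2 x.2 = \sum_(x <- pH) m (nu x.1.1) (nu x.1.2) (nu x.2).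
Proof. by move=> hm; case: nu_mor => _ _ _ hp; rewrite -(hp W m hm) big_map. Qed.

Lemma phiinv_nu : teq3 [seq (nu x.1.1, nu x.1.2, nu x.2) | x <- piH] piQ.
Proof.
set piN := [seq _ | x <- piH].
have phi_piN : teq3 (tmul3 pQ piN) (tmul3 (tone3 Q) (tone3 Q)).
  move=> W m [m1 m2 m3]; rewrite big_tmul3 !big_seq1 /= !mulr1.
  have hm : multilin3 (fun a b c => m (nu a) (nu b) (nu c)) by split=> *; linearity.
  have := phi_phiinv qbH hm; rewrite big_tmul3 big_seq1 /= !nu1 => <-.
  rewrite (big_phi_nu (m := fun a b c => \sum_(y <- piN)
    m (a * y.1.1) (b * y.1.2) (c * y.2))); last by split=> *; linearity.
  by apply: eq_bigr => x _; rewrite big_map; apply: eq_bigr => t _; rewrite /= !nuM.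
apply: teq3_trans (teq3_sym (tmul3t1 _)) _; apply: teq3_trans (tmul3t1 piQ).
exact: teq3_conj phi_piN (phiinv_phi qbQ) (tmul3t1 _).
Qed.

Lemma Sbar_quasi_antipode :
  is_quasi_antipode DQ eQ pQ piQ Sbar (nu al) (nu be).
Proof.
case: qaH => _ S_alpha S_beta S_phi S_phiinv.
split=> [||||]; first exact: Sbar_anti.
- move=> q; have [h <-] := nu_surj q.
  rewrite (big_Delta_nu (m := fun a b => Sbar a * nu al * b)); last by split=> *; linearity.
  under eq_bigr do rewrite SbarE -!nuM.
  by rewrite -(klinear_sum nu_lin) S_alpha (klinearZ nu_lin) eps_nu.
- move=> q; have [h <-] := nu_surj q.
  rewrite (big_Delta_nu (m := fun a b => a * nu be * Sbar b)); last by split=> *; linearity.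
  under eq_bigr do rewrite SbarE -!nuM.
  by rewrite -(klinear_sum nu_lin) S_beta (klinearZ nu_lin) eps_nu.
- rewrite (big_phi_nu (m := fun a b c => a * nu be * Sbar b * nu al * c));
    last by split=> *; linearity.
  under eq_bigr do rewrite SbarE -!nuM.
  by rewrite -(klinear_sum nu_lin) S_phi nu1.
- have hm : multilin3 (fun a b c => Sbar a * nu al * b * nu be * Sbar c).
    by split=> *; linearity.
  rewrite -(phiinv_nu hm) big_map /=.
  under eq_bigr do rewrite !SbarE -!nuM.
  by rewrite -(klinear_sum nu_lin) S_phiinv nu1.
Qed.

End QuotientQuasiHopf.

Theorem theorem2p1 (k : fieldType) (H : algType k)
    (DeltaH : H -> tensor2 H) (epsH : H -> k) (phiH phiinvH : tensor3 H)
    (S : H -> H) (alpha beta : H)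
    (Q : falgType k)
    (DeltaQ : Q -> tensor2 Q) (epsQ : Q -> k) (phiQ phiinvQ : tensor3 Q)
    (nu : H -> Q) :
  is_quasibialgebra DeltaH epsH phiH phiinvH ->
  is_quasi_antipode DeltaH epsH phiH phiinvH S alpha beta ->
  is_quasibialgebra DeltaQ epsQ phiQ phiinvQ ->
  is_quasibialg_morphism DeltaH epsH phiH DeltaQ epsQ phiQ nu ->
  (forall q : Q, exists h : H, nu h = q) ->
  (forall h : H, nu h = 0 -> nu (S h) = 0) /\
  exists Sbar : Q -> Q,
    [/\ is_anti_alg_endo Sbar,
        (forall h : H, Sbar (nu h) = nu (S h)),
        is_quasi_antipode DeltaQ epsQ phiQ phiinvQ Sbar (nu alpha) (nu beta) &
        is_quasiHopf_morphism DeltaH epsH phiH S alpha beta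
                              DeltaQ epsQ phiQ Sbar (nu alpha) (nu beta) nu].
Proof.
move=> qbH qaH qbQ nu_mor nu_surj.
split; first exact: nu_S_ker qbH qaH qbQ nu_mor nu_surj.
exists (Sbar S nu_surj); split.
- exact: Sbar_anti qbH qaH qbQ nu_mor nu_surj.
- exact: SbarE qbH qaH qbQ nu_mor nu_surj.
- exact: Sbar_quasi_antipode qbH qaH qbQ nu_mor nu_surj.
- by split=> // h; rewrite (SbarE qbH qaH qbQ nu_mor nu_surj).
Qed.
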